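(* Let $\mathbf n\ge 2$, let $A=B=C$ be the space of $\mathbf n\times\mathbf n$ complex matrices, and let $M_{\langle\mathbf n\rangle}\in A\otimes B\otimes C$ be the matrix multiplication tensor. Let $r=2\mathbf n^2-2$ and suppose that $$M_{\langle\mathbf n\rangle}=\sum_{\substack{i,j,k\ge 1\\ i+j+k\le r+2}} a_i\otimes b_j\otimes c_k$$ for some vectors $a_1,\dots,a_r\in A$, $b_1,\dots,b_r\in B$, $c_1,\dots,c_r\in C$ (so that $M_{\langle\mathbf n\rangle}$ lies in the open bud $\mathfrak b^\circ_r(Seg(\mathbb PA\times\mathbb PB\times\mathbb PC),[a_1\otimes b_1\otimes c_1])$; here $[a_1\otimes b_1\otimes c_1]$ is assumed to lie in $\mathcal K$). Then: (1) no two of the three sets $\{a_1,\dots,a_{\mathbf n^2}\}$, $\{b_1,\dots,b_{\mathbf n^2}\}$, $\{c_1,\dots,c_{\mathbf n^2}\}$ can both be linearly independent; and (2) each of $\dim\langle a_1,\dots,a_{2\mathbf n^2-\mathbf n-1}\rangle$, $\dim\langle b_1,\dots,b_{2\mathbf n^2-\mathbf n-1}\rangle$, $\dim\langle c_1,\dots,c_{2\mathbf n^2-\mathbf n-1}\rangle$ is at least $\mathbf n^2$.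
   Context: With $U,V,W\cong\mathbb C^{\mathbf n}$, $A=U^*\otimes V$, $B=V^*\otimes W$, $C=W^*\otimes U$, and $M_{\langle\mathbf n\rangle}=\mathrm{Id}_U\otimes\mathrm{Id}_V\otimes\mathrm{Id}_W$ (factors reordered); in bases, $M_{\langle\mathbf n\rangle}=\sum_{i,j,k=1}^{\mathbf n}x^i_j\otimes y^j_k\otimes z^k_i$. $\mathcal K$ is the set of $[\mu\otimes v\otimes\nu\otimes w\otimes\omega\otimes u]$ with $a=\mu\otimes v$, $b=\nu\otimes w$, $c=\omega\otimes u$ and $\mu(u)=\omega(w)=\nu(v)=0$. *)

From HB Require Import structures.
From mathcomp Require Import all_boot all_order all_algebra.
Set Implicit Arguments. Unset Strict Implicit. Unset Printing Implicit Defensive.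
Import Order.TTheory GRing.Theory Num.Theory.
Local Open Scope ring_scope.

(* A = U^* (x) V, B = V^* (x) W, C = W^* (x) U, all identified with n x n
   matrices: a : 'M_n has coordinates a i j w.r.t. x^i_j = u^i (x) v_j,
   b j k w.r.t. y^j_k = v^j (x) w_k, c k i w.r.t. z^k_i = w^k (x) u_i.
   An element of A (x) B (x) C is encoded by its coordinate function
   (p,q,s,t,u,v) |-> coefficient of x^p_q (x) y^s_t (x) z^u_v. *)

Definition tensor6 (F : Type) (n : nat) :=
  'I_n -> 'I_n -> 'I_n -> 'I_n -> 'I_n -> 'I_n -> F.

Definition tprod (F : nzRingType) (n : nat) (a b c : 'M[F]_n) : tensor6 F n :=
  fun p q s t u v => a p q * b s t * c u v.

(* matrix multiplication tensor  M_<n> = sum_{i,j,k} x^i_j (x) y^j_k (x) z^k_i *)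
Definition matmul_tensor (F : nzRingType) (n : nat) : tensor6 F n :=
  fun p q s t u v => ((q == s) && (t == u) && (v == p))%:R.

(* [a (x) b (x) c] lies in K: a = mu (x) v, b = nu (x) w, c = omega (x) u
   (mu in U^*, v in V, nu in V^*, w in W, omega in W^*, u in U, all nonzero
   since [.] is a projective point) with mu(u) = omega(w) = nu(v) = 0. *)
Definition in_K (F : nzRingType) (n : nat) (a b c : 'M[F]_n) : Prop :=
  exists (mu v nu w om u : 'I_n -> F),
    [/\ a = \matrix_(i, j) (mu i * v j),
        b = \matrix_(j, k) (nu j * w k) &
        c = \matrix_(k, i) (om k * u i)] /\
    [/\ a != 0, b != 0 & c != 0] /\
    [/\ \sum_i mu i * u i = 0, \sum_k om k * w k = 0 &
        \sum_j nu j * v j = 0].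

From HB Require Import structures.
From mathcomp Require Import all_boot all_order all_algebra.
From mathcomp Require Import zify ring.
Set Implicit Arguments. Unset Strict Implicit. Unset Printing Implicit Defensive.
Import Order.TTheory GRing.Theory Num.Theory.
Local Open Scope ring_scope.

(* Contracting the decomposition with al (x) be (x) ga gives, for N = n^2,
     tr (al be ga) = sum_{i+j+k <= 2N} <al, a_i> <be, b_j> <ga, c_k>,
   an identity that is symmetric under rotating (a, b, c). If the three
   functionals vanish on the vectors of index below i0, j0, k0, the right side is
   0 when i0 + j0 + k0 > 2N and is a single product when i0 + j0 + k0 = 2N.
   (2) If a_1 .. a_{2N-n-1} spanned fewer than N dimensions, some al != 0 would
   kill them and some be killing b_1 .. b_{n-1} would have al be != 0; yet
   tr (al be ga) = 0 for every ga.
   (1) If the a_i and the b_j (i, j <= N) are both independent, they have dual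
   functionals. The dual X of a_N is singular (g X = 0 for any g killing
   c_1 .. c_{N-1}), so some row y != 0 has y X = 0. Put ga = x y with
   <ga, c_{2N-n-1}> = 0 and let k0 be the first index with <ga, c_k0> != 0.
   Every al with y al = 0 has tr (al be ga) = 0, and taking for be the dual of
   b_{2N-i0-k0}, where i0 is the first index with <al, a_i0> != 0, refutes
   N <= i0 + k0 < 2N. With al = X this forces k0 >= N; if k0 <= 2N-n-2, a
   combination of the duals of a_1 .. a_{n+1} killed by y gives i0 <= n+1;
   if k0 >= 2N-n, a be killing b_1 .. b_{2N-k0-1} with be ga != 0 does. *)

Lemma sum_delta_mulr (R : nzSemiRingType) (I : finType) (i0 : I) (G : I -> R) :
  \sum_i (i == i0)%:R * G i = G i0.
Proof.
by rewrite (bigD1 i0) //= eqxx mul1r big1 ?addr0 // => i /negPf ->; rewrite mul0r.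
Qed.

Section LinearAlgebra.
Variable F : fieldType.

Lemma nontrivial_solution (I : finType) k (A : I -> 'I_k -> F) :
  (k < #|I|)%N ->
  exists2 z : I -> F, exists i, z i != 0 & forall j, \sum_i z i * A i j = 0.
Proof.
move=> k_lt; pose Am := \matrix_(i < #|I|, j < k) A (enum_val i) j.
have : kermx Am != 0.
  by rewrite kermx_eq0 /row_free neq_ltn (leq_ltn_trans (rank_leq_col Am) k_lt).
case/matrix0Pn=> i [l Kil]; exists (fun x => kermx Am i (enum_rank x)).
  by exists (enum_val l); rewrite enum_valK.
move=> j; transitivity ((kermx Am *m Am) i j); last by rewrite mulmx_ker mxE.
rewrite mxE [RHS](reindex (@enum_rank I)) /=; last first.
  by exists enum_val => x _; [apply: enum_rankK | apply: enum_valK].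
by apply: eq_bigr => x _; rewrite !mxE enum_rankK.
Qed.

Lemma mul_col_row_neq0 m p (x : 'cV[F]_m) (y : 'rV[F]_p) :
  x != 0 -> y != 0 -> x *m y != 0.
Proof.
case/cV0Pn=> i xi /rV0Pn[j yj]; apply/matrix0Pn; exists i, j.
by rewrite mxE big_ord1 mulf_neq0.
Qed.

Lemma mxtrace_mul_delta n (i j : 'I_n) (M : 'M[F]_n) :
  \tr (delta_mx i j *m M) = M j i.
Proof.
rewrite /mxtrace (bigD1 i) //= big1 ?addr0 => [|k k_i].
  rewrite mxE (bigD1 j) //= big1 ?addr0 => [|l l_j]; first by rewrite mxE !eqxx mul1r.
  by rewrite mxE (negPf l_j) andbF mul0r.
by rewrite mxE big1 // => l _; rewrite mxE (negPf k_i) mul0r.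
Qed.

Lemma mxtrace_nondegenerate n (M : 'M[F]_n) :
  (forall A, \tr (A *m M) = 0) -> M = 0.
Proof. by move=> trM0; apply/matrixP => i j; rewrite -mxtrace_mul_delta trM0 mxE. Qed.

End LinearAlgebra.

Section Pairing.
Variables (F : fieldType) (n : nat).
Implicit Types (al be ga v x : 'M[F]_n).

Definition pairing al x : F := \sum_i \sum_j al i j * x i j.

Lemma pairingDr al x v : pairing al (x + v) = pairing al x + pairing al v.
Proof.
rewrite /pairing -big_split; apply: eq_bigr => i _; rewrite -big_split.
by apply: eq_bigr => j _; rewrite mxE mulrDr.
Qed.

Lemma pairing0r al : pairing al 0 = 0.
Proof. by rewrite /pairing big1 // => i _; rewrite big1 // => j _; rewrite mxE mulr0. Qed.

Lemma pairingZr al x k : pairing al (k *: x) = k * pairing al x.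
Proof.
rewrite /pairing mulr_sumr; apply: eq_bigr => i _; rewrite mulr_sumr.
by apply: eq_bigr => j _; rewrite mxE mulrCA.
Qed.

Lemma pairing_sumr al I (r : seq I) (P : pred I) (G : I -> 'M[F]_n) :
  pairing al (\sum_(i <- r | P i) G i) = \sum_(i <- r | P i) pairing al (G i).
Proof. exact: (big_morph (pairing al) (pairingDr al) (pairing0r al)). Qed.

Lemma pairingDl al be x : pairing (al + be) x = pairing al x + pairing be x.
Proof.
rewrite /pairing -big_split; apply: eq_bigr => i _; rewrite -big_split.
by apply: eq_bigr => j _; rewrite mxE mulrDl.
Qed.

Lemma pairing0l x : pairing 0 x = 0.
Proof. by rewrite /pairing big1 // => i _; rewrite big1 // => j _; rewrite mxE mul0r. Qed.

Lemma pairingZl al x k : pairing (k *: al) x = k * pairing al x.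
Proof.
rewrite /pairing mulr_sumr; apply: eq_bigr => i _; rewrite mulr_sumr.
by apply: eq_bigr => j _; rewrite mxE mulrA.
Qed.

Lemma pairing_suml x I (r : seq I) (P : pred I) (G : I -> 'M[F]_n) :
  pairing (\sum_(i <- r | P i) G i) x = \sum_(i <- r | P i) pairing (G i) x.
Proof.
exact: (big_morph (pairing^~ x) (fun al be => pairingDl al be x) (pairing0l x)).
Qed.

Lemma pairing_tr al x : pairing al^T x^T = pairing al x.
Proof.
rewrite /pairing exchange_big; apply: eq_bigr => i _.
by apply: eq_bigr => j _; rewrite !mxE.
Qed.

Lemma pairing_col_row (u : 'cV[F]_n) (w : 'rV[F]_n) v :
  pairing (u *m w) v = \sum_i u i 0 * \sum_j w 0 j * v i j.
Proof.
apply: eq_bigr => i _; rewrite mulr_sumr; apply: eq_bigr => j _.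
by rewrite mxE big_ord1 mulrA.
Qed.

Lemma coord_pairing m (X : m.-tuple 'M[F]_n) (j : 'I_m) v :
  coord X j v = pairing (\matrix_(p, q) coord X j (delta_mx p q)) v.
Proof.
rewrite {1}(matrix_sum_delta v) linear_sum; apply: eq_bigr => p _.
rewrite linear_sum; apply: eq_bigr => q _.
by rewrite linearZ mxE /= mulrC.
Qed.

Lemma free_iota_dual (d : nat -> 'M[F]_n) N j :
  free [seq d i | i <- iota 1 N] -> (0 < j <= N)%N ->
  exists X, forall i, (0 < i <= N)%N -> pairing X (d i) = (i == j)%:R.
Proof.
set s := [seq d i | i <- iota 1 N] => free_s j_N.
have size_s : size s = N by rewrite size_map size_iota.
have j_lt : (j.-1 < size s)%N by rewrite size_s; lia.
exists (\matrix_(p, q) coord (in_tuple s) (Ordinal j_lt) (delta_mx p q)) => i i_N.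
have i_lt : (i.-1 < size s)%N by rewrite size_s; lia.
have -> : d i = (in_tuple s)`_(Ordinal i_lt).
  have i_lt_N : (i.-1 < N)%N by rewrite -size_s.
  rewrite /= (nth_map 0%N) ?size_iota // nth_iota //.
  by rewrite add1n prednK //; case/andP: i_N.
rewrite -coord_pairing coord_free //; congr (_%:R).
by rewrite -val_eqE /=; apply/eqP/eqP; lia.
Qed.

Lemma exists_annihilator (s : seq 'M[F]_n) :
  (\dim (span s) < n ^ 2)%N ->
  exists2 al, al != 0 & {in s, forall v, pairing al v = 0}.
Proof.
set B := vbasis (span s) => dim_lt.
have card_lt : (\dim (span s) < #|{: 'I_n * 'I_n}|)%N.
  by rewrite card_prod card_ord mulnn.
have [z [[p q] z_nz] z_B] :=
  nontrivial_solution (fun pq l => B`_l pq.1 pq.2) card_lt.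
exists (\matrix_(p, q) z (p, q)); first by apply/matrix0Pn; exists p, q; rewrite mxE.
move=> v /memv_span/coord_vbasis ->; rewrite pairing_sumr big1 // => l _.
rewrite pairingZr; apply/eqP; rewrite mulf_eq0; apply/orP; right; apply/eqP.
by rewrite -(z_B l) /pairing pair_bigA; apply: eq_bigr => -[p' q'] _; rewrite mxE.
Qed.

Lemma exists_right_factor (s : seq 'M[F]_n) al :
  (size s < n)%N -> al != 0 ->
  exists2 be : 'M_n, {in s, forall v, pairing be v = 0} & al *m be != 0.
Proof.
rewrite -[n in (_ < n)%N]card_ord => size_lt /matrix0Pn[p [q al_pq]].
have [z [t z_t] z_s] := nontrivial_solution (fun t l => s`_l q t) size_lt.
exists (delta_mx q 0 *m \row_t z t).
  move=> v /(nthP 0)[l l_lt <-].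
  rewrite pairing_col_row (bigD1 q) //= [X in _ + X]big1.
    rewrite mxE !eqxx mul1r addr0 -[RHS](z_s (Ordinal l_lt)).
    by apply: eq_bigr => t' _; rewrite mxE.
  by move=> i i_q; rewrite mxE (negPf i_q) mul0r.
rewrite mulmxA -colE mul_col_row_neq0 //.
  by apply/cV0Pn; exists p; rewrite mxE.
by apply/rV0Pn; exists t; rewrite mxE.
Qed.

Lemma exists_left_factor (s : seq 'M[F]_n) ga :
  (size s < n)%N -> ga != 0 ->
  exists2 be : 'M_n, {in s, forall v, pairing be v = 0} & be *m ga != 0.
Proof.
move=> size_lt ga_nz.
have [||be be_s gabe_nz] := @exists_right_factor [seq v^T | v <- s] ga^T;
  rewrite ?size_map ?trmx_eq0 //.
exists be^T; last by rewrite -trmx_eq0 trmx_mul trmxK.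
by move=> v v_s; rewrite -pairing_tr trmxK be_s ?map_f.
Qed.

End Pairing.

Lemma sum_nat_only1 (R : nmodType) m p x0 (G : nat -> R) :
  (m <= x0 < p)%N -> (forall x, (m <= x < p)%N -> x != x0 -> G x = 0) ->
  \sum_(m <= x < p) G x = G x0.
Proof.
move=> x0_in G0; rewrite (bigD1_seq x0) ?mem_index_iota ?iota_uniq //=.
by rewrite big1_seq ?addr0 // => x /andP[x_x0]; rewrite mem_index_iota => /G0; apply.
Qed.

Section BudSum.
Variables (R : nzRingType) (r : nat) (f g h : nat -> R).

Definition bud_sum : R :=
  \sum_(1 <= i < r.+1) \sum_(1 <= j < r.+1)
     \sum_(1 <= k < r.+1 | (i + j + k <= r + 2)%N) f i * g j * h k.

Variables i0 j0 k0 : nat.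
Hypothesis f_below : forall i, (0 < i < i0)%N -> f i = 0.
Hypothesis g_below : forall j, (0 < j < j0)%N -> g j = 0.
Hypothesis h_below : forall k, (0 < k < k0)%N -> h k = 0.

Lemma bud_term_eq0 i j k : (0 < i)%N -> (0 < j)%N -> (0 < k)%N ->
  [|| i < i0, j < j0 | k < k0]%N -> f i * g j * h k = 0.
Proof.
move=> i_pos j_pos k_pos.
case: (ltnP i i0) => [i_lt _|_]; first by rewrite f_below ?mul0r // i_pos.
case: (ltnP j j0) => [j_lt _|_]; first by rewrite g_below ?mulr0 ?mul0r // j_pos.
by case: (ltnP k k0) => // k_lt _; rewrite h_below ?mulr0 // k_pos.
Qed.

Lemma bud_sum_eq0 : (r + 2 < i0 + j0 + k0)%N -> bud_sum = 0.
Proof.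
move=> ijk0_gt.
apply: big1_seq => i /andP[_]; rewrite mem_index_iota => /andP[i_pos _].
apply: big1_seq => j /andP[_]; rewrite mem_index_iota => /andP[j_pos _].
apply: big1_seq => k /andP[ijk]; rewrite mem_index_iota => /andP[k_pos _].
by apply: bud_term_eq0 => //; lia.
Qed.

Lemma bud_sum_lead : (0 < i0)%N -> (0 < j0)%N -> (0 < k0)%N ->
  (i0 + j0 + k0 = r + 2)%N -> bud_sum = f i0 * g j0 * h k0.
Proof.
move=> i0_pos j0_pos k0_pos ijk0.
have other_eq0 i j k : (0 < i)%N -> (0 < j)%N -> (0 < k)%N ->
    (i + j + k <= r + 2)%N -> [|| i != i0, j != j0 | k != k0] ->
  f i * g j * h k = 0.
  by move=> *; apply: bud_term_eq0 => //; lia.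
rewrite /bud_sum (sum_nat_only1 (x0 := i0)) => [||i /andP[i_pos _] i_i0]; last 2 first.
- lia.
- apply: big1_seq => j /andP[_]; rewrite mem_index_iota => /andP[j_pos _].
  apply: big1_seq => k /andP[ijk]; rewrite mem_index_iota => /andP[k_pos _].
  by apply: other_eq0; rewrite ?i_i0.
rewrite (sum_nat_only1 (x0 := j0)) => [||j /andP[j_pos _] j_j0]; last 2 first.
- lia.
- apply: big1_seq => k /andP[ijk]; rewrite mem_index_iota => /andP[k_pos _].
  by apply: other_eq0; rewrite ?j_j0 ?orbT.
rewrite big_mkcond (sum_nat_only1 (x0 := k0)) => [||k /andP[k_pos _] k_k0].
- by rewrite ijk0 leqnn.
- lia.
- by case: ifP => // ijk; apply: other_eq0; rewrite ?k_k0 ?orbT.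
Qed.

End BudSum.

Lemma bud_sum_rot (R : comNzRingType) r (f g h : nat -> R) :
  bud_sum r f g h = bud_sum r g h f.
Proof.
rewrite /bud_sum.
under eq_bigr => i _ do under eq_bigr => j _ do rewrite big_mkcond.
under [RHS]eq_bigr => i _ do under eq_bigr => j _ do rewrite big_mkcond.
under [RHS]eq_bigr => j _ do rewrite exchange_big.
rewrite [RHS]exchange_big; apply: eq_bigr => i _; apply: eq_bigr => j _.
apply: eq_bigr => k _ /=.
by rewrite [(j + k + i)%N]addnC addnA [g j * _ * _]mulrC mulrA.
Qed.

Section Contraction.
Variables (F : fieldType) (n : nat) (al be ga : 'M[F]_n).

Definition tcontract (T : tensor6 F n) : F :=
  \sum_p \sum_q \sum_s \sum_t \sum_u \sum_v
    al p q * be s t * ga u v * T p q s t u v.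

Lemma tcontract_sum I (r : seq I) (P : pred I) (T : I -> tensor6 F n) :
  tcontract (fun p q s t u v => \sum_(i <- r | P i) T i p q s t u v)
  = \sum_(i <- r | P i) tcontract (T i).
Proof.
rewrite /tcontract.
under eq_bigr => p _ do under eq_bigr => q _ do under eq_bigr => s _ do
  under eq_bigr => t _ do under eq_bigr => u _ do under eq_bigr => v _ do
  rewrite big_distrr.
under eq_bigr => p _ do under eq_bigr => q _ do under eq_bigr => s _ do
  under eq_bigr => t _ do under eq_bigr => u _ do rewrite exchange_big.
under eq_bigr => p _ do under eq_bigr => q _ do under eq_bigr => s _ do
  under eq_bigr => t _ do rewrite exchange_big.
under eq_bigr => p _ do under eq_bigr => q _ do under eq_bigr => s _ do
  rewrite exchange_big.
under eq_bigr => p _ do under eq_bigr => q _ do rewrite exchange_big.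
under eq_bigr => p _ do rewrite exchange_big.
by rewrite exchange_big.
Qed.

Lemma tcontract_tprod x y z :
  tcontract (tprod x y z) = pairing al x * pairing be y * pairing ga z.
Proof.
rewrite /tcontract /tprod /pairing -mulrA big_distrl /=; apply: eq_bigr => p _.
rewrite big_distrl /=; apply: eq_bigr => q _.
rewrite big_distrl big_distrr /=; apply: eq_bigr => s _.
rewrite big_distrl big_distrr /=; apply: eq_bigr => t _.
rewrite big_distrr big_distrr /=; apply: eq_bigr => u _.
rewrite big_distrr big_distrr /=; apply: eq_bigr => v _.
ring.
Qed.

Lemma tcontract_matmul : tcontract (@matmul_tensor F n) = \tr (al *m be *m ga).
Proof.
rewrite /tcontract /matmul_tensor /mxtrace; apply: eq_bigr => p _.
rewrite mxE; under [RHS]eq_bigr => t _ do rewrite mxE big_distrl.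
rewrite [RHS]exchange_big; apply: eq_bigr => q _ /=.
transitivity (\sum_s (s == q)%:R * \sum_t \sum_u (u == t)%:R *
   \sum_v (v == p)%:R * (al p q * be s t * ga u v)).
  apply: eq_bigr => s _; rewrite mulr_sumr; apply: eq_bigr => t _.
  rewrite mulr_sumr; apply: eq_bigr => u _; rewrite !mulr_sumr.
  apply: eq_bigr => v _; rewrite -!mulnb !natrM [s == q]eq_sym [u == t]eq_sym.
  ring.
rewrite sum_delta_mulr; apply: eq_bigr => t _.
by rewrite !sum_delta_mulr.
Qed.

End Contraction.

Definition bud_decomposition (F : fieldType) n r (a b c : nat -> 'M[F]_n) :=
  forall al be ga : 'M[F]_n,
  bud_sum r (fun i => pairing al (a i)) (fun j => pairing be (b j))
            (fun k => pairing ga (c k))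
  = \tr (al *m be *m ga).

Lemma bud_decomposition_of_tensor (F : fieldType) n r (a b c : nat -> 'M[F]_n) :
  (forall p q s t u v : 'I_n,
     \sum_(1 <= i < r.+1) \sum_(1 <= j < r.+1)
       \sum_(1 <= k < r.+1 | (i + j + k <= r + 2)%N)
         tprod (a i) (b j) (c k) p q s t u v
     = @matmul_tensor F n p q s t u v) ->
  bud_decomposition r a b c.
Proof.
move=> decompM al be ga; rewrite -tcontract_matmul.
transitivity (tcontract al be ga (fun p q s t u v =>
  \sum_(1 <= i < r.+1) \sum_(1 <= j < r.+1)
    \sum_(1 <= k < r.+1 | (i + j + k <= r + 2)%N)
      tprod (a i) (b j) (c k) p q s t u v)); last first.
  by do 6 (apply: eq_bigr => ? _); rewrite decompM.
rewrite tcontract_sum; apply: eq_bigr => i _; rewrite tcontract_sum.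
apply: eq_bigr => j _; rewrite tcontract_sum; apply: eq_bigr => k _.
by rewrite tcontract_tprod.
Qed.

Lemma bud_decomposition_rot (F : fieldType) n r (a b c : nat -> 'M[F]_n) :
  bud_decomposition r a b c -> bud_decomposition r b c a.
Proof.
move=> dec al be ga; rewrite -bud_sum_rot dec.
by rewrite [RHS]mxtrace_mulC mulmxA.
Qed.

Definition first_nonzero (R : zmodType) (f : nat -> R) (i0 : nat) :=
  [/\ (0 < i0)%N, f i0 != 0 & forall i, (0 < i < i0)%N -> f i = 0].

Lemma first_nonzero_or_all0 (R : zmodType) (f : nat -> R) m :
  (forall i, (0 < i <= m)%N -> f i = 0) \/ exists2 i0, (i0 <= m)%N & first_nonzero f i0.
Proof.
elim: m => [|m [all0 | [i0 i0_le i0_first]]]; first by left=> i; lia.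
- case: (eqVneq (f m.+1) 0) => [f0 | f_nz]; [left | right].
    move=> i i_le; case: (ltnP i m.+1) => [i_lt|i_ge]; first by apply: all0; lia.
    by have -> : i = m.+1 by lia.
  by exists m.+1 => //; split=> // i i_lt; apply: all0; lia.
- by right; exists i0; rewrite ?leqW.
Qed.

Lemma dual_below (F : fieldType) n (d : nat -> 'M[F]_n) X N j :
  (forall i, (0 < i <= N)%N -> pairing X (d i) = (i == j)%:R) -> (j <= N)%N ->
  forall i, (0 < i < j)%N -> pairing X (d i) = 0.
Proof.
move=> X_dual j_le i /andP[i_pos i_lt].
by rewrite X_dual ?ltn_eqF // i_pos (leq_trans (ltnW i_lt) j_le).
Qed.

Lemma mxtrace_col_row_eq0 (R : comNzRingType) n (al be : 'M[R]_n)
    (x : 'cV_n) (y : 'rV_n) :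
  y *m al = 0 -> \tr (al *m be *m (x *m y)) = 0.
Proof. by move=> y_al; rewrite mulmxA mxtrace_mulC !mulmxA y_al !mul0mx mxtrace0. Qed.

Section OpenBud.
Variables (F : fieldType) (n : nat) (a b c : nat -> 'M[F]_n).
Hypothesis n_ge2 : (2 <= n)%N.
Local Notation N := (n ^ 2)%N.
Hypothesis decomp : bud_decomposition (2 * N - 2) a b c.

Let n_add2_le_N : (n + 2 <= N)%N. Proof. by nia. Qed.

Lemma mxtrace_bud_eq0 al be ga i0 j0 k0 :
  (forall i, (0 < i < i0)%N -> pairing al (a i) = 0) ->
  (forall j, (0 < j < j0)%N -> pairing be (b j) = 0) ->
  (forall k, (0 < k < k0)%N -> pairing ga (c k) = 0) ->
  (2 * N < i0 + j0 + k0)%N -> \tr (al *m be *m ga) = 0.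
Proof.
move=> al_below be_below ga_below ijk0; rewrite -decomp.
by apply: bud_sum_eq0 al_below be_below ga_below _; have := n_add2_le_N; lia.
Qed.

Lemma mxtrace_bud_lead al be ga i0 j0 k0 :
  (forall i, (0 < i < i0)%N -> pairing al (a i) = 0) ->
  (forall j, (0 < j < j0)%N -> pairing be (b j) = 0) ->
  (forall k, (0 < k < k0)%N -> pairing ga (c k) = 0) ->
  (0 < i0)%N -> (0 < j0)%N -> (0 < k0)%N -> (i0 + j0 + k0 = 2 * N)%N ->
  \tr (al *m be *m ga) = pairing al (a i0) * pairing be (b j0) * pairing ga (c k0).
Proof.
move=> al_below be_below ga_below i0_pos j0_pos k0_pos ijk0; rewrite -decomp.
by apply: bud_sum_lead al_below be_below ga_below _ _ _ _ => //; have := n_add2_le_N; lia.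
Qed.

Lemma bud_dim_span_lower :
  (N <= \dim (span [seq a i | i <- iota 1 (2 * N - n - 1)]))%N.
Proof.
have N_big := n_add2_le_N.
rewrite leqNgt; apply/negP => /exists_annihilator[al al_nz al_a].
have [||be be_b albe_nz] :=
  @exists_right_factor _ _ [seq b j | j <- iota 1 (n - 1)] al.
- by rewrite size_map size_iota; lia.
- exact: al_nz.
move/eqP: albe_nz; apply; apply: mxtrace_nondegenerate => ga; rewrite mxtrace_mulC.
apply: (mxtrace_bud_eq0 (i0 := (2 * N - n)) (j0 := n) (k0 := 1)); last by lia.
- by move=> i i_lt; apply: al_a; rewrite map_f // mem_iota; lia.
- by move=> j j_lt; apply: be_b; rewrite map_f // mem_iota; lia.
- by move=> k; lia.
Qed.

Lemma last_dual_left_kernel X :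
  (forall i, (0 < i <= N)%N -> pairing X (a i) = (i == N)%:R) ->
  exists2 y : 'rV_n, y != 0 & y *m X = 0.
Proof.
move=> X_dual; have N_big := n_add2_le_N.
have [|g g_nz g_c] := @exists_annihilator _ _ [seq c k | k <- iota 1 (N - 1)].
  by apply: leq_ltn_trans (dim_span _) _; rewrite size_map size_iota; lia.
have gX : g *m X = 0.
  apply: mxtrace_nondegenerate => be; rewrite mulmxA mxtrace_mulC mulmxA.
  apply: (mxtrace_bud_eq0 (i0 := N) (j0 := 1) (k0 := N)); last by lia.
  - exact: dual_below X_dual _.
  - by move=> j; lia.
  - by move=> k k_lt; apply: g_c; rewrite map_f // mem_iota; lia.
case/matrix0Pn: g_nz => i [j g_ij]; exists (row i g).
  by apply/rV0Pn; exists j; rewrite mxE.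
by rewrite -row_mul gX row0.
Qed.

Lemma no_late_lead ga k0 :
  ga != 0 -> first_nonzero (fun k => pairing ga (c k)) k0 ->
  (2 * N - n <= k0)%N -> False.
Proof.
move=> ga_nz [k0_pos _ ga_below] k0_ge; have N_big := n_add2_le_N.
have [|be be_b bega_nz] :=
  @exists_left_factor _ _ [seq b j | j <- iota 1 (2 * N - k0 - 1)] ga _ ga_nz.
  by rewrite size_map size_iota; lia.
move/eqP: bega_nz; apply; apply: mxtrace_nondegenerate => al; rewrite mulmxA.
apply: (mxtrace_bud_eq0 (i0 := 1) (j0 := 2 * N - k0) (k0 := k0)) => //; last by lia.
- by move=> i; lia.
- by move=> j j_lt; apply: be_b; rewrite map_f // mem_iota; lia.
Qed.

Section FreePair.
Hypothesis free_a : free [seq a i | i <- iota 1 N].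
Hypothesis free_b : free [seq b i | i <- iota 1 N].

Lemma no_lead_pair (x : 'cV_n) (y : 'rV_n) al i0 k0 :
  y *m al = 0 -> first_nonzero (fun i => pairing al (a i)) i0 ->
  first_nonzero (fun k => pairing (x *m y) (c k)) k0 ->
  (N <= i0 + k0 < 2 * N)%N -> False.
Proof.
move=> y_al [i0_pos al_i0 al_below] [k0_pos ga_k0 ga_below] ik0.
set j0 := (2 * N - (i0 + k0))%N.
have j0_pos : (0 < j0)%N by lia.
have j0_le : (j0 <= N)%N by lia.
have ijk0 : (i0 + j0 + k0 = 2 * N)%N by lia.
have j0_in : (0 < j0 <= N)%N by rewrite j0_pos j0_le.
have [Y Y_dual] := free_iota_dual free_b j0_in.
have := mxtrace_bud_lead al_below (dual_below Y_dual j0_le) ga_below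
  i0_pos j0_pos k0_pos ijk0.
rewrite mxtrace_col_row_eq0 // Y_dual ?j0_pos // eqxx mulr1 => /esym/eqP.
by rewrite mulf_eq0 (negPf al_i0) (negPf ga_k0).
Qed.

Lemma exists_form_killed_by_row (y : 'rV_n) :
  exists2 al, y *m al = 0 & exists2 i, (0 < i <= n.+1)%N & pairing al (a i) != 0.
Proof.
have N_big := n_add2_le_N.
have /fin_all_exists[X X_dual] : forall l : 'I_n.+1, exists X,
    forall i, (0 < i <= N)%N -> pairing X (a i) = (i == l.+1)%:R.
  by move=> l; apply: free_iota_dual free_a _; have := ltn_ord l; lia.
have card_gt : (n < #|{: 'I_n.+1}|)%N by rewrite card_ord.
have [z [l z_l] z_y] := nontrivial_solution (fun l q => (y *m X l) 0 q) card_gt.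
exists (\sum_l z l *: X l).
  apply/rowP => q; rewrite mulmx_sumr summxE [RHS]mxE -[RHS](z_y q).
  by apply: eq_bigr => l' _; rewrite -scalemxAr mxE.
exists l.+1; first exact: ltn_ord l.
rewrite pairing_suml (bigD1 l) //= big1 ?addr0.
  by rewrite pairingZl X_dual ?eqxx ?mulr1 //; have := ltn_ord l; lia.
move=> l' l'_l; rewrite pairingZl X_dual; last by have := ltn_ord l; lia.
by rewrite eqSS val_eqE eq_sym (negPf l'_l) mulr0.
Qed.

Lemma bud_not_free_pair : False.
Proof.
have N_big := n_add2_le_N.
have N_in : (0 < N <= N)%N by lia.
have [X X_dual] := free_iota_dual free_a N_in.
have [y y_nz y_X] := last_dual_left_kernel X_dual.
have [x x_nz x_K] :
    exists2 x : 'cV_n, x != 0 & pairing (x *m y) (c (2 * N - n - 1)) = 0.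
  have card_gt : (1 < #|{: 'I_n}|)%N by rewrite card_ord.
  have [z [t z_t] z_K] :=
    nontrivial_solution
      (fun t (_ : 'I_1) => \sum_j y 0 j * c (2 * N - n - 1)%N t j) card_gt.
  exists (\col_t z t); first by apply/cV0Pn; exists t; rewrite mxE.
  by rewrite pairing_col_row -[RHS](z_K 0); apply: eq_bigr => t' _; rewrite mxE.
have ga_nz : x *m y != 0 by apply: mul_col_row_neq0.
have [ga0 | [k0 k0_le k0_first]] :=
  first_nonzero_or_all0 (fun k => pairing (x *m y) (c k)) (2 * N - 2).
  move/eqP: ga_nz; apply; apply: mxtrace_nondegenerate => al; rewrite -[al]mulmx1.
  apply: (mxtrace_bud_eq0 (i0 := 1) (j0 := 1) (k0 := 2 * N - 1)); last by lia.
  - by move=> i; lia.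
  - by move=> j; lia.
  - by move=> k k_lt; apply: ga0; lia.
have N_le_k0 : (N <= k0)%N.
  rewrite leqNgt; apply/negP => k0_lt.
  apply: (no_lead_pair (i0 := N) y_X _ k0_first); last by lia.
  split; [lia | by rewrite X_dual ?eqxx ?oner_eq0 // | exact: dual_below X_dual _].
case: (leqP (2 * N - n) k0) => [late | early].
  exact: no_late_lead ga_nz k0_first late.
have k0_K : k0 != (2 * N - n - 1)%N.
  by case: k0_first => _ ga_k0 _; apply: contraNneq ga_k0 => ->; rewrite x_K.
have [al y_al [i i_le al_i]] := exists_form_killed_by_row y.
have [al0 | [i0 i0_le i0_first]] :=
  first_nonzero_or_all0 (fun i => pairing al (a i)) n.+1.
  by move: al_i; rewrite al0 ?eqxx.
by apply: (no_lead_pair y_al i0_first k0_first); lia.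
Qed.

End FreePair.
End OpenBud.

Unset Implicit Arguments. Set Strict Implicit.

Theorem proposition4p5 (F : numClosedFieldType) (n r : nat)
  (hn : (2 <= n)%N) (hr : r = (2 * n ^ 2 - 2)%N)
  (a b c : nat -> 'M[F]_n)
  (hK : in_K (a 1%N) (b 1%N) (c 1%N))
  (hM : forall p q s t u v : 'I_n,
     \sum_(1 <= i < r.+1) \sum_(1 <= j < r.+1)
       \sum_(1 <= k < r.+1 | (i + j + k <= r + 2)%N)
         tprod (a i) (b j) (c k) p q s t u v
     = @matmul_tensor F n p q s t u v) :
  let sa := [seq a i | i <- iota 1 (n ^ 2)] in
  let sb := [seq b i | i <- iota 1 (n ^ 2)] in
  let sc := [seq c i | i <- iota 1 (n ^ 2)] in
  let m := (2 * n ^ 2 - n - 1)%N in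
  [/\ ~~ (free sa && free sb), ~~ (free sa && free sc) & ~~ (free sb && free sc)] /\
  [/\ (n ^ 2 <= \dim (span [seq a i | i <- iota 1 m]))%N,
       (n ^ 2 <= \dim (span [seq b i | i <- iota 1 m]))%N &
      (n ^ 2 <= \dim (span [seq c i | i <- iota 1 m]))%N].
Proof.
move=> sa sb sc m; subst r.
have dec_abc := bud_decomposition_of_tensor hM.
have dec_bca := bud_decomposition_rot dec_abc.
have dec_cab := bud_decomposition_rot dec_bca.
split; split; try apply/negP => /andP[].
- exact: bud_not_free_pair hn dec_abc.
- by move=> free_a free_c; exact: bud_not_free_pair hn dec_cab free_c free_a.
- exact: bud_not_free_pair hn dec_bca.
- exact: bud_dim_span_lower hn dec_abc.
- exact: bud_dim_span_lower hn dec_bca.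
- exact: bud_dim_span_lower hn dec_cab.
Qed.
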